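(* Let $\gamma\in\mathrm{SL}_2(\mathbb{Z})$ and $k\ge1$ with $\det(\mathrm{Id}_2-\gamma^k)\neq0$, so that $\operatorname{coker}(\mathrm{Id}_2-\gamma^k)=\mathbb{Z}^2/(\mathrm{Id}_2-\gamma^k)\mathbb{Z}^2$ is finite, and let $\gamma$ act on it by multiplication. Then for $1\le p<k$, the number of fixed points of $\gamma^p$ on $\operatorname{coker}(\mathrm{Id}_2-\gamma^k)$ equals $|\det(\mathrm{Id}_2-\gamma^d)|$, where $d=\gcd(k,p)$ if $\gamma$ has infinite order, and $d=\gcd(k,p,m)$ if $\gamma$ has finite order $m$. *)

From mathcomp Require Import all_boot all_order all_algebra.
Set Implicit Arguments. Unset Strict Implicit. Unset Printing Implicit Defensive.
Import Order.TTheory GRing.Theory Num.Theory.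
Local Open Scope ring_scope.

Definition coker_eq (A : 'M[int]_2) (v w : 'cV[int]_2) : Prop :=
  exists u : 'cV[int]_2, v - w = A *m u.

Definition coker_fixed (A h : 'M[int]_2) (v : 'cV[int]_2) : Prop :=
  coker_eq A (h *m v) v.

Definition num_fixed_points (A h : 'M[int]_2) (n : nat) : Prop :=
  exists s : seq 'cV[int]_2,
    [/\ size s = n,
        (forall i j : nat, (i < n)%N -> (j < n)%N ->
            coker_eq A (nth 0 s i) (nth 0 s j) -> i = j),
        (forall v, v \in s -> coker_fixed A h v) &
        (forall v, coker_fixed A h v -> exists2 w, w \in s & coker_eq A v w)].

Definition mx_order (g : 'M[int]_2) (m : nat) : Prop :=
  [/\ (0 < m)%N, g ^+ m = 1 & forall j : nat, (0 < j < m)%N -> g ^+ j != 1].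

Definition infinite_order (g : 'M[int]_2) : Prop :=
  forall j : nat, (0 < j)%N -> g ^+ j != 1.

(* Put A = 1 - g^k.  For d | k write h = g^d and S = 1 + h + ... + h^(k/d - 1),
   so that A = (1 - h) S with commuting nonsingular factors.  Since h v - v =
   -(1 - h) v, the class of v is fixed by h iff v lies in S Z^2, and
   multiplication by S maps coker (1 - h) bijectively onto these fixed classes;
   by the Smith normal form coker (1 - h) has |det (1 - h)| elements.  Finally,
   the exponents j for which g^j fixes a given class are closed under sums and
   differences and contain k (and m when g^m = 1), hence their gcds: g^p and g^d
   have the same fixed classes for the d of the statement. *)

From mathcomp Require Import all_boot all_order all_algebra.
Set Implicit Arguments. Unset Strict Implicit. Unset Printing Implicit Defensive.
Import Order.TTheory GRing.Theory Num.Theory.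
Local Open Scope ring_scope.

Lemma mulmx_det_inj (R : idomainType) n p (B : 'M[R]_n) :
  \det B != 0 -> injective (mulmx B : 'M[R]_(n, p) -> 'M[R]_(n, p)).
Proof.
move=> dB x y Bxy; apply: (scalemx_inj dB).
by rewrite -!mul_scalar_mx -mul_adj_mx -!mulmxA Bxy.
Qed.

Lemma commr_1subX (R : pzRingType) (x : R) k : GRing.comm (1 - x ^+ k) x.
Proof. exact/commr_sym/commrB/commrX/commr_refl/commr1. Qed.

Section CokerCongruence.
Variable A : 'M[int]_2.

Lemma coker_eq_refl v : coker_eq A v v.
Proof. by exists 0; rewrite subrr mulmx0. Qed.

Lemma coker_eq_sym v w : coker_eq A v w -> coker_eq A w v.
Proof. by case=> u E; exists (- u); rewrite mulmxN -E opprB. Qed.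

Lemma coker_eq_trans v w x :
  coker_eq A v w -> coker_eq A w x -> coker_eq A v x.
Proof.
by case=> u1 E1 [u2 E2]; exists (u1 + u2); rewrite mulmxDr -E1 -E2 addrA subrK.
Qed.

Lemma coker_eq_mull h v w :
  GRing.comm h A -> coker_eq A v w -> coker_eq A (h *m v) (h *m w).
Proof.
move=> hA [u E]; exists (h *m u).
by rewrite -mulmxBr E !mulmxA mulmxE hA.
Qed.

End CokerCongruence.

Section FixedExponents.
Variables (A g : 'M[int]_2) (v : 'cV[int]_2).
Hypothesis gA : GRing.comm A g.

Lemma coker_fixed_exp0 : coker_fixed A (g ^+ 0) v.
Proof. by rewrite /coker_fixed expr0 mul1mx; apply: coker_eq_refl. Qed.

Lemma coker_fixed_expD i j : coker_fixed A (g ^+ i) v ->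
  coker_fixed A (g ^+ j) v -> coker_fixed A (g ^+ (i + j)) v.
Proof.
move=> Fi Fj; rewrite /coker_fixed exprD -mulmxE -mulmxA.
exact: coker_eq_trans (coker_eq_mull (commr_sym (commrX i gA)) Fj) Fi.
Qed.

Lemma coker_fixed_expB i j : (j <= i)%N -> coker_fixed A (g ^+ i) v ->
  coker_fixed A (g ^+ j) v -> coker_fixed A (g ^+ (i - j)) v.
Proof.
move=> ji Fi Fj; apply: coker_eq_trans _ Fi.
have := coker_eq_mull (commr_sym (commrX (i - j) gA)) Fj.
by rewrite mulmxA mulmxE -exprD subnK //; apply: coker_eq_sym.
Qed.

Lemma coker_fixed_expM c j :
  coker_fixed A (g ^+ j) v -> coker_fixed A (g ^+ (c * j)) v.
Proof.
move=> Fj; elim: c => [|c IHc]; first exact: coker_fixed_exp0.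
by rewrite mulSn; apply: coker_fixed_expD.
Qed.

Lemma coker_fixed_expG i j : coker_fixed A (g ^+ i) v ->
  coker_fixed A (g ^+ j) v -> coker_fixed A (g ^+ gcdn i j) v.
Proof.
have [-> _ | i_gt0 Fi Fj] := posnP i; first by rewrite gcd0n.
have [a b Eab _] := egcdnP j i_gt0.
have -> : gcdn i j = (a * i - b * j)%N by rewrite Eab addKn.
by apply: coker_fixed_expB; [rewrite Eab leq_addr | exact: coker_fixed_expM..].
Qed.

End FixedExponents.

Definition coker_reps (A : 'M[int]_2) (t : seq 'cV[int]_2) : Prop :=
  [/\ uniq t, {in t &, forall v w, coker_eq A v w -> v = w} &
      forall v, exists2 w, w \in t & coker_eq A v w].

Definition residues (a : int) : seq int := [seq n%:Z | n <- iota 0 `|a|].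

Lemma mem_residues a x : (x \in residues a) = (0 <= x < `|a|).
Proof.
apply/mapP/idP => [[n] | /andP[x_ge0 x_lt]].
  by rewrite mem_iota add0n => /= n_lt ->; rewrite lez_nat -abszE ltz_nat.
exists `|x|%N; last by rewrite gez0_abs.
by rewrite mem_iota add0n /= -ltz_nat (gez0_abs x_ge0).
Qed.

Lemma residues_uniq a : uniq (residues a).
Proof. by rewrite map_inj_uniq ?iota_uniq // => m n []. Qed.

Lemma size_residues a : size (residues a) = `|a|%N.
Proof. by rewrite size_map size_iota. Qed.

Lemma residues_eq a x y : x \in residues a -> y \in residues a ->
  (a %| x - y)%Z -> x = y.
Proof.
rewrite !mem_residues -eqz_mod_dvd -abszE => x_res y_res /eqP.
by rewrite -!(modz_abs _ a) !modz_small.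
Qed.

Lemma residues_mod a x : a != 0 -> (x %% a)%Z \in residues a.
Proof. by move=> a0; rewrite mem_residues modz_ge0 ?ltz_mod. Qed.

Definition col2 (a b : int) : 'cV[int]_2 := \col_i [:: a; b]`_i.

Lemma col2K (v : 'cV[int]_2) : col2 (v 0 0) (v 1 0) = v.
Proof.
apply/matrixP => i j; rewrite !mxE (ord1 j).
by case: i => [[|[|]]] //= i_lt; congr (v _ _); apply: val_inj.
Qed.

Lemma coker_eq_diag (r : 'rV[int]_2) v w :
  coker_eq (diag_mx r) v w <-> forall i, (r ord0 i %| v i ord0 - w i ord0)%Z.
Proof.
split=> [[u] /matrixP E i | r_dvd].
  by have := E i 0; rewrite mul_diag_mx !mxE => ->; apply: dvdz_mulr.
exists (\col_i ((v i ord0 - w i ord0) %/ r ord0 i)%Z).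
apply/matrixP => i j; rewrite mul_diag_mx !mxE (ord1 j) mulrC divzK //.
Qed.

Definition residue_box (r : 'rV[int]_2) : seq 'cV[int]_2 :=
  [seq col2 a b | a <- residues (r 0 0), b <- residues (r 0 1)].

Lemma coker_reps_diag (r : 'rV[int]_2) : r 0 0 != 0 -> r 0 1 != 0 ->
  coker_reps (diag_mx r) (residue_box r).
Proof.
move=> r0 r1; split.
- apply: allpairs_uniq; rewrite ?residues_uniq // => -[a b] [a' b'] _ _.
  move=> /= /matrixP E; congr pair.
    by have := E 0 0; rewrite !mxE.
  by have := E 1 0; rewrite !mxE.
- move=> v w /allpairsP[[a b] [/= a_res b_res ->]].
  move=> /allpairsP[[a' b'] [/= a'_res b'_res ->]] /coker_eq_diag dvd_ab.
  have := dvd_ab 0; have := dvd_ab 1; rewrite !mxE /= => db da.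
  by rewrite (residues_eq a_res a'_res da) (residues_eq b_res b'_res db).
- move=> v; exists (\col_i (modz (v i ord0) (r ord0 i))).
    rewrite -[X in X \in _]col2K !mxE.
    by apply: allpairs_f; apply: residues_mod.
  apply/coker_eq_diag => i; rewrite -eqz_mod_dvd mxE eq_sym.
  by apply/eqP; apply: modz_mod.
Qed.

Lemma coker_reps_unimodular (L D R : 'M[int]_2) t :
  L \in unitmx -> R \in unitmx -> coker_reps D t ->
  coker_reps (L *m D *m R) (map (mulmx L) t).
Proof.
move=> uL uR [t_uniq t_inj t_cover]; split.
- by rewrite (map_inj_uniq (can_inj (mulKmx uL))).
- move=> _ _ /mapP[v tv ->] /mapP[w tw ->] [u].
  rewrite -mulmxBr -!mulmxA => /(can_inj (mulKmx uL)) E.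
  by rewrite (t_inj v w) //; exists (R *m u).
- move=> v; have [w tw [u E]] := t_cover (invmx L *m v).
  exists (L *m w); first exact: map_f.
  exists (invmx R *m u).
  by rewrite -!mulmxA mulKVmx // -E mulmxBr mulmxA mulmxV // mul1mx.
Qed.

Lemma absz_unit (x : int) : x \is a GRing.unit -> `|x|%N = 1%N.
Proof. by case/orP => /eqP ->. Qed.

Lemma coker_reps_card (B : 'M[int]_2) : \det B != 0 ->
  exists2 t, coker_reps B t & size t = `|\det B|%N.
Proof.
have [L uL [R uR [d _ ->]]] := int_Smith_normal_form B.
have -> : \matrix_(i, j) (d`_i *+ (i == j :> nat)) =
          diag_mx (\row_i d`_i : 'rV[int]_2).
  by apply/matrixP => i j; rewrite !mxE.
move: (\row_i _) => r; rewrite !det_mulmx det_diag.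
have -> : \prod_i r 0 i = r 0 0 * r 0 1.
  by rewrite big_ord_recl big_ord1; congr (_ * r _ _); apply: val_inj.
rewrite !mulf_eq0 !negb_or => /andP[/and3P[_ r0 r1] _].
exists (map (mulmx L) (residue_box r)).
  by apply: coker_reps_unimodular => //; apply: coker_reps_diag.
rewrite size_map size_allpairs !size_residues !abszM.
rewrite unitmxE in uL uR.
by rewrite (absz_unit uL) (absz_unit uR) mul1n muln1.
Qed.

Lemma num_fixed_points_seq (A h : 'M[int]_2) s : uniq s ->
  {in s &, forall v w, coker_eq A v w -> v = w} ->
  (forall v, v \in s -> coker_fixed A h v) ->
  (forall v, coker_fixed A h v -> exists2 w, w \in s & coker_eq A v w) ->
  num_fixed_points A h (size s).
Proof.
move=> s_uniq s_inj s_fixed s_cover; exists s; split=> // i j i_lt j_lt E.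
apply/eqP; rewrite -(nth_uniq 0 i_lt j_lt s_uniq); apply/eqP.
by apply: s_inj => //; apply: mem_nth.
Qed.

Lemma num_fixed_points_eq (A h1 h2 : 'M[int]_2) n :
  (forall v, coker_fixed A h1 v <-> coker_fixed A h2 v) ->
  num_fixed_points A h1 n -> num_fixed_points A h2 n.
Proof.
move=> h12 [s [s_size s_inj s_fixed s_cover]]; exists s; split=> //.
- by move=> v /s_fixed /h12.
- by move=> v /h12 /s_cover.
Qed.

Section FixedPointsOfFactor.
Variables B S : 'M[int]_2.
Hypotheses (detB : \det B != 0) (detS : \det S != 0) (BS : GRing.comm B S).

Lemma coker_eq_mul_factor v w :
  coker_eq (B * S) (S *m v) (S *m w) <-> coker_eq B v w.
Proof.
rewrite BS -mulmxE; split=> [[u] | [u E]]; last first.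
  by exists u; rewrite -mulmxBr E mulmxA.
by rewrite -mulmxBr -mulmxA => /(mulmx_det_inj detS) E; exists u.
Qed.

Lemma coker_fixed_sub1_mul v :
  coker_fixed (B * S) (1 - B) v <-> exists u, v = S *m u.
Proof.
rewrite /coker_fixed /coker_eq mulmxBl mul1mx addrAC subrr add0r -mulmxE.
split=> [[u] | [u ->]]; last by exists (- u); rewrite mulmxN mulmxA.
rewrite -mulmxA -mulmxN => /(mulmx_det_inj detB) E.
by exists (- u); rewrite mulmxN -E opprK.
Qed.

Lemma num_fixed_points_sub1_mul :
  num_fixed_points (B * S) (1 - B) `|\det B|%N.
Proof.
have [t [t_uniq t_inj t_cover] <-] := coker_reps_card detB.
rewrite -(size_map (mulmx S)); apply: num_fixed_points_seq.
- by rewrite (map_inj_uniq (mulmx_det_inj detS)).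
- move=> _ _ /mapP[v tv ->] /mapP[w tw ->] /coker_eq_mul_factor vw.
  by rewrite (t_inj v w).
- by move=> _ /mapP[v _ ->]; apply/coker_fixed_sub1_mul; exists v.
- move=> _ /coker_fixed_sub1_mul[u ->]; have [w tw uw] := t_cover u.
  by exists (S *m w); [apply: map_f | apply/coker_eq_mul_factor].
Qed.

End FixedPointsOfFactor.

Lemma num_fixed_points_dvd (g : 'M[int]_2) k d : (0 < d)%N -> (d %| k)%N ->
  \det (1 - g ^+ k) != 0 ->
  num_fixed_points (1 - g ^+ k) (g ^+ d) `|\det (1 - g ^+ d)|%N.
Proof.
move=> d_gt0 /dvdnP[n ->]; set h := g ^+ d; set S := \sum_(i < n) h ^+ i.
have -> : g ^+ (n * d) = h ^+ n by rewrite mulnC exprM.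
have -> : 1 - h ^+ n = (1 - h) * S by rewrite -opprB subrX1 -mulNr opprB.
have hS : GRing.comm (1 - h) S.
  apply: commr_sum => i _; apply: commr_sym.
  by apply: commrB (commr1 _) _; apply/commr_sym/commrX.
rewrite -mulmxE det_mulmx mulf_eq0 negb_or mulmxE => /andP[dB dS].
by rewrite -[X in num_fixed_points _ X](subKr 1); apply: num_fixed_points_sub1_mul.
Qed.

Lemma coker_fixed_sub1 (h : 'M[int]_2) v : coker_fixed (1 - h) h v.
Proof. by exists (- v); rewrite mulmxN mulmxBl mul1mx opprB. Qed.

Lemma num_fixed_points_gcd (g : 'M[int]_2) k p d :
  (0 < d)%N -> (d %| k)%N -> (d %| p)%N -> \det (1 - g ^+ k) != 0 ->
  (forall v, coker_fixed (1 - g ^+ k) (g ^+ p) v ->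
             coker_fixed (1 - g ^+ k) (g ^+ d) v) ->
  num_fixed_points (1 - g ^+ k) (g ^+ p) `|\det (1 - g ^+ d)|%N.
Proof.
move=> d_gt0 dk /dvdnP[c ->] dA Fd.
have gA := commr_1subX g k.
apply: num_fixed_points_eq (num_fixed_points_dvd d_gt0 dk dA) => v.
by split=> [/(coker_fixed_expM gA) | /Fd].
Qed.

Theorem lemma3p8 (g : 'M[int]_2) (k p : nat) :
  \det g = 1 -> (1 <= k)%N -> \det (1 - g ^+ k) != 0 ->
  (1 <= p)%N -> (p < k)%N ->
  (infinite_order g ->
     num_fixed_points (1 - g ^+ k) (g ^+ p) `|\det (1 - g ^+ gcdn k p)|%N) /\
  (forall m : nat, mx_order g m ->
     num_fixed_points (1 - g ^+ k) (g ^+ p)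
       `|\det (1 - g ^+ gcdn (gcdn k p) m)|%N).
Proof.
move=> _ k_gt0 dA _ _.
have gA := commr_1subX g k.
have Fk v := coker_fixed_sub1 (g ^+ k) v.
split=> [_ | m [m_gt0 gm _]]; apply: num_fixed_points_gcd => //.
- by rewrite gcdn_gt0 k_gt0.
- exact: dvdn_gcdl.
- exact: dvdn_gcdr.
- by move=> v /(coker_fixed_expG gA (Fk v)).
- by rewrite gcdn_gt0 m_gt0 orbT.
- exact: dvdn_trans (dvdn_gcdl _ _) (dvdn_gcdl _ _).
- exact: dvdn_trans (dvdn_gcdl _ _) (dvdn_gcdr _ _).
- move=> v /(coker_fixed_expG gA (Fk v)) /(coker_fixed_expG gA); apply.
  by rewrite /coker_fixed gm mul1mx; apply: coker_eq_refl.
Qed.
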